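(* Let $\mathcal C$ be an $R$-coring satisfying the left $\alpha$-condition. (i) If $M$ is a left $\mathcal C$-comodule that is finitely generated and projective as a left $R$-module, then ${}^*M$ is a rational right ${}^*\mathcal C$-module. (ii) Suppose $\mathcal C=M\oplus N$ as left $\mathcal C$-comodules. Then ${}^*M$ is a rational right ${}^*\mathcal C$-module if and only if $M$ is finitely generated as a left $R$-module.
   Context: An $R$-coring is a triple $(\mathcal C,\Delta,\varepsilon)$ with $\mathcal C$ an $R$-bimodule and $\Delta:\mathcal C\to\mathcal C\otimes_R\mathcal C$, $\varepsilon:\mathcal C\to R$ coassociative and counital $R$-bimodule maps; write $\Delta(c)=c_{(1)}\otimes_R c_{(2)}$. ${}^*\mathcal C={}_R\mathrm{Hom}(\mathcal C,R)$ is a ring with product $(f\#g)(c)=g(c_{(1)}f(c_{(2)}))$ and unit $\varepsilon$. $\mathcal C$ satisfies the left $\alpha$-condition if it is locally projective as a left $R$-module. A left $\mathcal C$-comodule is a left $R$-module $M$ with a coassociative counital left $R$-linear map $M\to\mathcal C\otimes_R M$, $m\mapsto m_{[-1]}\otimes m_{[0]}$. For a left comodule $M$, ${}^*M={}_R\mathrm{Hom}(M,R)$ is a right ${}^*\mathcal C$-module via $(h\cdot f)(m)=f(m_{[-1]}h(m_{[0]}))$. A right ${}^*\mathcal C$-module $X$ is rational if for every $x\in X$ there is $\sum_i x_i\otimes c_i\in X\otimes_R\mathcal C$ with $x\cdot f=\sum_i x_if(c_i)$ for all $f\in{}^*\mathcal C$. *)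

From HB Require Import structures.
From mathcomp Require Import all_boot all_order all_algebra.
Set Implicit Arguments. Unset Strict Implicit. Unset Printing Implicit Defensive.
Import GRing.Theory.
Local Open Scope ring_scope.

Section Corings.
Variable R : pzRingType.

(* An element
   of A (x)_R B is represented by a finite list of pairs (a_i, b_i), standing
   for sum_i a_i (x) b_i; two lists represent the same element of A (x)_R B
   iff every R-balanced biadditive map into an abelian group agrees on them. *)
Definition balanced (A : zmodType) (ra : A -> R -> A) (B : lmodType R)
    (G : zmodType) (phi : A -> B -> G) : Prop :=
  [/\ forall a a' b, phi (a + a') b = phi a b + phi a' b,
      forall a b b', phi a (b + b') = phi a b + phi a b' &
      forall a r b, phi (ra a r) b = phi a (r *: b)].

Definition teq (A : zmodType) (ra : A -> R -> A) (B : lmodType R)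
    (s t : seq (A * B)) : Prop :=
  forall (G : zmodType) (phi : A -> B -> G), balanced ra phi ->
    \sum_(p <- s) phi p.1 p.2 = \sum_(p <- t) phi p.1 p.2.

(* triple tensor A (x)_R B (x)_R D, with B an R-bimodule *)
Definition balanced3 (A : zmodType) (ra : A -> R -> A) (B : lmodType R)
    (rb : B -> R -> B) (D : lmodType R) (G : zmodType)
    (phi : A -> B -> D -> G) : Prop :=
  [/\ forall a a' b d, phi (a + a') b d = phi a b d + phi a' b d,
      forall a b b' d, phi a (b + b') d = phi a b d + phi a b' d,
      forall a b d d', phi a b (d + d') = phi a b d + phi a b d',
      forall a r b d, phi (ra a r) b d = phi a (r *: b) d &
      forall a b r d, phi a (rb b r) d = phi a b (r *: d)].

Definition teq3 (A : zmodType) (ra : A -> R -> A) (B : lmodType R)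
    (rb : B -> R -> B) (D : lmodType R) (s t : seq (A * B * D)) : Prop :=
  forall (G : zmodType) (phi : A -> B -> D -> G), balanced3 ra rb phi ->
    \sum_(p <- s) phi p.1.1 p.1.2 p.2 = \sum_(p <- t) phi p.1.1 p.1.2 p.2.

Definition surjective (A B : Type) (g : A -> B) := forall y, exists x, g x = y.

Definition in_span (M : lmodType R) (s : seq M) (x : M) : Prop :=
  exists (n : nat) (a : 'I_n -> R) (v : 'I_n -> M),
    (forall i, v i \in s) /\ x = \sum_(i < n) a i *: v i.

Definition finitely_generated (M : lmodType R) : Prop :=
  exists s : seq M, forall x, in_span s x.

Definition projective (M : lmodType R) : Prop :=
  forall (L N : lmodType R) (g : {linear L -> N}) (h : {linear M -> N}),
    surjective g -> exists h' : {linear M -> L}, forall x, g (h' x) = h x.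

Definition locally_projective (M : lmodType R) : Prop :=
  forall (L N : lmodType R) (g : {linear L -> N}) (h : {linear M -> N}),
    surjective g -> forall s : seq M,
    exists h' : {linear M -> L}, forall x, in_span s x -> g (h' x) = h x.

Record coring (C : lmodType R) := Coring {
  rC : C -> R -> C;
  Delta : C -> seq (C * C);
  eps : C -> R;
  rC_addl : forall c c' r, rC (c + c') r = rC c r + rC c' r;
  rC_addr : forall c r s, rC c (r + s) = rC c r + rC c s;
  rC_1 : forall c, rC c 1 = c;
  rC_mul : forall c r s, rC c (r * s) = rC (rC c r) s;
  rC_bimod : forall a c r, rC (a *: c) r = a *: rC c r;
  Delta_add : forall c c', teq rC (Delta (c + c')) (Delta c ++ Delta c');
  Delta_scalel : forall a c,
    teq rC (Delta (a *: c)) [seq (a *: p.1, p.2) | p <- Delta c];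
  Delta_scaler : forall c r,
    teq rC (Delta (rC c r)) [seq (p.1, rC p.2 r) | p <- Delta c];
  eps_add : forall c c', eps (c + c') = eps c + eps c';
  eps_scalel : forall a c, eps (a *: c) = a * eps c;
  eps_scaler : forall c r, eps (rC c r) = eps c * r;
  Delta_coassoc : forall c,
    teq3 rC rC
      [seq (q.1, q.2, p.2) | p <- Delta c, q <- Delta p.1]
      [seq (p.1, q.1, q.2) | p <- Delta c, q <- Delta p.2];
  Delta_counitl : forall c, \sum_(p <- Delta c) eps p.1 *: p.2 = c;
  Delta_counitr : forall c, \sum_(p <- Delta c) rC p.1 (eps p.2) = c
}.

Section Comodules.
Variables (C : lmodType R) (K : coring C).

Record comodule := Comodule {
  comod_car :> lmodType R;
  coact : comod_car -> seq (C * comod_car);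
  coact_add : forall m m', teq (rC K) (coact (m + m')) (coact m ++ coact m');
  coact_scale : forall a m,
    teq (rC K) (coact (a *: m)) [seq (a *: p.1, p.2) | p <- coact m];
  coact_coassoc : forall m,
    teq3 (rC K) (rC K)
      [seq (q.1, q.2, p.2) | p <- coact m, q <- Delta K p.1]
      [seq (p.1, q.1, q.2) | p <- coact m, q <- coact p.2];
  coact_counit : forall m, \sum_(p <- coact m) eps K p.1 *: p.2 = m
}.

Definition comod_hom_to_C (M : comodule) (g : {linear M -> C}) : Prop :=
  forall m, teq (rC K) (Delta K (g m)) [seq (p.1, g p.2) | p <- coact m].

Definition direct_sum_decomp (M N : comodule)
    (iM : {linear M -> C}) (iN : {linear N -> C}) : Prop :=
  (forall c, exists m n, c = iM m + iN n) /\
  (forall m n, iM m + iN n = 0 -> m = 0 /\ n = 0).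

Definition dual_act (M : comodule) (h : M -> R) (f : C -> R) : M -> R :=
  fun m => \sum_(p <- coact m) f (rC K p.1 (h p.2)).

Definition rational_dual (M : comodule) : Prop :=
  forall h : {linear M -> R^o},
  exists s : seq ({linear M -> R^o} * C),
    forall (f : {linear C -> R^o}) (m : M),
      dual_act h f m = \sum_(p <- s) p.1 m * f p.2.

End Comodules.
End Corings.

From HB Require Import structures.
From mathcomp Require Import all_boot all_order all_algebra.
From mathcomp.multinomials Require Import monalg.
From mathcomp Require Import finmap.
From Stdlib Require Import ClassicalEpsilon.
Set Implicit Arguments. Unset Strict Implicit. Unset Printing Implicit Defensive.
Import GRing.Theory.
Local Open Scope ring_scope.

(* The key notion is a finite dual basis of a left R-module M: functionals
   e_1..e_n in *M and elements s_1..s_n of M with m = sum_j e_j(m) s_j.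
   - For a comodule M and h in *M, the action h.f is f applied to the fixed
     element m_[-1] h(m_[0]) of C.  Hence a finite dual basis of M makes *M
     rational, with rational expansion h.f = sum_j e_j f(s_j_[-1] h(s_j_[0])).
   - A finitely generated projective module has a finite dual basis (lift the
     identity along R^n -> M); so does a finitely generated direct summand M
     of a locally projective C (use local projectivity on the image of M).
     This gives (i) and the "if" part of (ii).
   - Local projectivity of C implies that *C separates the points of C
     (lift along the free module on C).  If *M is rational, applying
     rationality to eps o iM gives f(iM m) = sum_i h_i(m) f(c_i) for every f,
     hence iM m = sum_i h_i(m) c_i; projecting the c_i onto M yields finitely
     many generators of M, the "only if" part of (ii). *)

Section LinearAlgebra.
Variable R : pzRingType.

Definition linear_of (U V : lmodType R) (f : U -> V)
    (f_lin : forall a x y, f (a *: x + y) = a *: f x + f y) : {linear U -> V} :=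
  HB.pack f (GRing.isLinear.Build R U V *:%R f f_lin).

Lemma linear_ofE (U V : lmodType R) f f_lin x : @linear_of U V f f_lin x = f x.
Proof. by []. Qed.

Definition idL (U : lmodType R) : {linear U -> U} :=
  linear_of (fun a (x y : U) => erefl (a *: x + y)).

Lemma dual_linZ (U : lmodType R) (h : {linear U -> R^o}) r x :
  h (r *: x) = r * h x.
Proof. by rewrite linearZ. Qed.

Definition has_dual_basis (M : lmodType R) : Prop :=
  exists n (e : 'I_n -> {linear M -> R^o}) (s : 'I_n -> M),
    forall m, m = \sum_(j < n) (e j m : R) *: s j.

Definition combination (M : lmodType R) n (s : 'I_n -> M) (v : 'rV[R]_n) : M :=
  \sum_(j < n) v 0 j *: s j.

Lemma combination_lin (M : lmodType R) n (s : 'I_n -> M) a x y :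
  combination s (a *: x + y) = a *: combination s x + combination s y.
Proof.
rewrite /combination scaler_sumr -big_split; apply: eq_bigr => j _.
by rewrite !mxE scalerDl scalerA.
Qed.

Definition combinationL (M : lmodType R) n (s : 'I_n -> M) :=
  linear_of (combination_lin s).

Lemma coord_lin n (j : 'I_n) a (x y : 'rV[R]_n) :
  ((a *: x + y) 0 j : R^o) = a *: (x 0 j : R^o) + (y 0 j : R^o).
Proof. by rewrite !mxE. Qed.

Definition coordL n (j : 'I_n) := linear_of (coord_lin j).

Lemma span_coords (M : lmodType R) (s : seq M) x : in_span s x ->
  exists w : 'I_(size s) -> R, x = \sum_(j < size s) w j *: s`_j.
Proof.
case=> n [a [v [v_in ->]]].
elim: n a v v_in => [|n IHn] a v v_in.
  by exists (fun _ => 0); rewrite big_ord0 big1 // => j _; rewrite scale0r.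
rewrite big_ord_recr /=.
have [w ->] := IHn (fun i => a (widen_ord (leqnSn n) i))
                   (fun i => v (widen_ord (leqnSn n) i)) (fun i => v_in _).
have idx_lt : (index (v ord_max) s < size s)%N by rewrite index_mem.
exists (fun j => w j + (if j == Ordinal idx_lt then a ord_max else 0)).
under [RHS]eq_bigr => j _ do rewrite scalerDl.
rewrite big_split /=; congr (_ + _).
rewrite (bigD1 (Ordinal idx_lt)) //= eqxx nth_index // big1 ?addr0 //.
by move=> j /negbTE ->; rewrite scale0r.
Qed.

Lemma combination_surj (M : lmodType R) (s : seq M) :
  (forall x, in_span s x) -> surjective (combinationL (fun j : 'I_(size s) => s`_j)).
Proof.
move=> s_gen y; have [w ->] := span_coords (s_gen y).
by exists (\row_j w j); apply: eq_bigr => j _; rewrite mxE.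
Qed.

(* A finitely generated projective module has a finite dual basis:
   lift the identity of M along R^n -> M. *)
Lemma fg_projective_dual_basis (M : lmodType R) :
  finitely_generated M -> projective M -> has_dual_basis M.
Proof.
case=> s s_gen M_proj.
have [lift liftK] := M_proj _ _ _ (idL M) (combination_surj s_gen).
exists (size s), (fun j => coordL j \o lift), (fun j => s`_j) => m.
by rewrite -[LHS]liftK.
Qed.

(* A finitely generated direct summand M of a locally projective module C
   has a finite dual basis: lift the identity of C along R^n (+) N -> C on the
   finitely generated submodule iM(M), then read off the R^n-component. *)
Lemma summand_dual_basis (C M N : lmodType R)
    (iM : {linear M -> C}) (iN : {linear N -> C}) :
  locally_projective C ->
  (forall c, exists m n, c = iM m + iN n) ->
  (forall m n, iM m + iN n = 0 -> m = 0 /\ n = 0) ->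
  finitely_generated M -> has_dual_basis M.
Proof.
move=> C_lproj C_sum C_direct [s s_gen].
pose G := combinationL (fun j : 'I_(size s) => s`_j).
have g_lin a (x y : ('rV[R]_(size s) * N)%type) :
    iM (G (a *: x + y).1) + iN (a *: x + y).2 =
    a *: (iM (G x.1) + iN x.2) + (iM (G y.1) + iN y.2).
  by rewrite /= combination_lin !linearP scalerDr addrACA.
have g_surj : surjective (linear_of g_lin).
  move=> c; have [m [y ->]] := C_sum c.
  have [v Gv] := combination_surj s_gen m.
  by exists (v, y); rewrite linear_ofE /= -Gv.
have [lift liftK] := C_lproj _ _ _ (idL C) g_surj (map iM s).
have image_span m : in_span (map iM s) (iM m).
  have [k [a [v [v_in ->]]]] := s_gen m.
  exists k, a, (fun i => iM (v i)); split; first by move=> i; rewrite map_f.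
  by rewrite linear_sum; apply: eq_bigr => i _; rewrite linearZ.
have e_lin j a (x y : M) :
    (((lift (iM (a *: x + y))).1 0 j) : R^o) =
    a *: ((lift (iM x)).1 0 j : R^o) + ((lift (iM y)).1 0 j : R^o).
  by rewrite !linearP /= !mxE.
exists (size s), (fun j => linear_of (e_lin j)), (fun j => s`_j) => m.
have := liftK _ (image_span m); rewrite !linear_ofE => /= lift_m.
have : iM (m - G (lift (iM m)).1) + iN (- (lift (iM m)).2) = 0.
  by rewrite !raddfB raddfN /= -{1}lift_m addrAC addrK subrr.
by case/C_direct => /subr0_eq m_eq _; rewrite {1}m_eq.
Qed.

Lemma summand_fg_of_expansion (C M N : lmodType R)
    (iM : {linear M -> C}) (iN : {linear N -> C})
    (s : seq ({linear M -> R^o} * C)) :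
  (forall c, exists m n, c = iM m + iN n) ->
  (forall m n, iM m + iN n = 0 -> m = 0 /\ n = 0) ->
  (forall m, iM m = \sum_(p <- s) (p.1 m : R) *: p.2) ->
  finitely_generated M.
Proof.
move=> C_sum C_direct iM_exp.
have components c : {mn : (M * N)%type | c = iM mn.1 + iN mn.2}.
  apply: constructive_indefinite_description.
  by have [m [n E]] := C_sum c; exists (m, n).
pose pM c := (sval (components c)).1.
pose pN c := (sval (components c)).2.
exists [seq pM p.2 | p <- s] => x.
have x_exp : x = \sum_(p <- s) (p.1 x : R) *: pM p.2.
  have : iM (x - \sum_(p <- s) (p.1 x : R) *: pM p.2) +
         iN (- \sum_(p <- s) (p.1 x : R) *: pN p.2) = 0.
    rewrite raddfB raddfN !raddf_sum; move: (iM_exp x) => /= ->.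
    rewrite -addrA -!big_split /= big1 // => p _.
    by rewrite -opprD !linearZ -scalerDr -(svalP (components p.2)) subrr.
  by case/C_direct => /subr0_eq.
pose d0 := (\0 : {linear M -> R^o}, 0 : C).
exists (size s), (fun i => ((nth d0 s i).1 x : R)), (fun i => pM (nth d0 s i).2).
split; last by rewrite {1}x_exp (big_nth d0) big_mkord.
by move=> i; rewrite -(nth_map d0 0 (fun p => pM p.2)) ?mem_nth ?size_map.
Qed.

End LinearAlgebra.

Definition free (T : choiceType) (R : pzRingType) : Type := malg T R.
HB.instance Definition _ T R := GRing.Zmodule.on (free T R).

Section FreeModule.
Variables (T : choiceType) (R : pzRingType).

Definition free_scale (c : R) (g : free T R) : free T R :=
  [malg k in msupp g => c * g@_k].

Lemma free_scaleE c g k : (free_scale c g)@_k = c * g@_k.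
Proof.
rewrite /free_scale mcoeffE; case: ifP => // /negbT k_out.
by rewrite mcoeff_outdom // mulr0.
Qed.

Lemma free_scaleA a b g : free_scale a (free_scale b g) = free_scale (a * b) g.
Proof. by apply/malgP => k; rewrite !free_scaleE mulrA. Qed.

Lemma free_scale1 g : free_scale 1 g = g.
Proof. by apply/malgP => k; rewrite !free_scaleE mul1r. Qed.

Lemma free_scaleDr a : {morph free_scale a : x y / x + y}.
Proof.
by move=> x y; apply/malgP => k; rewrite !(free_scaleE, mcoeffD) mulrDr.
Qed.

Lemma free_scaleDl v : {morph free_scale^~ v : a b / a + b}.
Proof.
by move=> x y; apply/malgP => k; rewrite !(free_scaleE, mcoeffD) mulrDl.
Qed.

HB.instance Definition _ := GRing.Zmodule_isLmodule.Build R (free T R)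
  free_scaleA free_scale1 free_scaleDr free_scaleDl.

Lemma mcoeff_lin (k : T) a (x y : free T R) :
  ((a *: x + y)@_k : R^o) = a *: (x@_k : R^o) + (y@_k : R^o).
Proof. by rewrite mcoeffD /= free_scaleE. Qed.

Definition coeffL k := linear_of (mcoeff_lin k).

End FreeModule.
Arguments coeffL {T R}.

Section Separation.
Variables (R : pzRingType) (C : lmodType R).

Definition free_sum (x : free C R) : C := \sum_(k <- msupp x) x@_k *: k.

Lemma free_sum_supp (x : free C R) D :
  (msupp x `<=` D)%fset -> free_sum x = \sum_(k <- D) x@_k *: k.
Proof.
move=> x_D; apply: big_fset_incl => // k _ k_out.
by rewrite mcoeff_outdom // scale0r.
Qed.

Lemma free_sum_lin a x y : free_sum (a *: x + y) = a *: free_sum x + free_sum y.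
Proof.
set D := (msupp x `|` msupp y `|` msupp (a *: x + y))%fset.
have sub_D z : (msupp z `<=` D)%fset -> free_sum z = \sum_(k <- D) z@_k *: k.
  exact: free_sum_supp.
rewrite !sub_D; try by apply/fsubsetP => k kx; rewrite /D !inE kx ?orbT.
rewrite scaler_sumr -big_split /=; apply: eq_bigr => k _.
by rewrite mcoeffD /= free_scaleE scalerDl scalerA.
Qed.

Definition free_sumL := linear_of free_sum_lin.

Lemma free_sum_surj : surjective free_sumL.
Proof.
move=> c; exists << 1 *g c >>; rewrite linear_ofE (@free_sum_supp _ [fset c]%fset).
  by rewrite big_seq_fset1 mcoeffUU scale1r.
exact: msuppU_le.
Qed.

(* Functionals separate the points of a locally projective module: lifting
   the identity along the free module on C at d, d is a combination of
   points with coefficients given by functionals vanishing at d. *)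
Lemma locally_projective_separates (d : C) :
  locally_projective C -> (forall f : {linear C -> R^o}, f d = 0) -> d = 0.
Proof.
move=> C_lproj f_d.
have [lift liftK] := C_lproj _ _ _ (idL C) free_sum_surj [:: d].
have d_span : in_span [:: d] d.
  exists 1%N, (fun _ => 1), (fun _ => d); split => [i|]; first by rewrite mem_seq1.
  by rewrite big_ord1 scale1r.
have lift_d : lift d = 0.
  by apply/malgP => k; rewrite mcoeff0; exact: (f_d (coeffL k \o lift)).
by rewrite -[d](liftK _ d_span) lift_d raddf0.
Qed.

End Separation.

Section RationalDual.
Variables (R : pzRingType) (C : lmodType R) (K : coring C).

Section Contraction.
Variables (M : comodule K) (h : {linear M -> R^o}).

Definition contract (m : M) : C := \sum_(p <- coact m) rC K p.1 (h p.2).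

Lemma contract_balanced : balanced (rC K) (fun (c : C) (x : M) => rC K c (h x)).
Proof.
split.
- by move=> a a' b; rewrite rC_addl.
- by move=> a b b'; rewrite raddfD rC_addr.
- by move=> a r b; rewrite -rC_mul dual_linZ.
Qed.

Lemma contract_lin a x y : contract (a *: x + y) = a *: contract x + contract y.
Proof.
rewrite /contract (coact_add _ _ contract_balanced) big_cat /=.
rewrite (coact_scale _ _ contract_balanced) big_map /= scaler_sumr.
by congr (_ + _); apply: eq_bigr => p _; rewrite rC_bimod.
Qed.

Definition contractL := linear_of contract_lin.

Lemma dual_actE (f : {linear C -> R^o}) m : dual_act h f m = f (contract m).
Proof. by rewrite /dual_act /contract raddf_sum. Qed.

End Contraction.

Lemma dual_basis_rational (M : comodule K) : has_dual_basis M -> rational_dual M.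
Proof.
case=> n [e [s M_exp]] h.
exists [seq (e j, contract h (s j)) | j <- enum 'I_n] => f m.
have -> : dual_act h f m = f (contractL h (\sum_(j < n) (e j m : R) *: s j)).
  by rewrite -M_exp dual_actE.
rewrite (linear_sum (contractL h)) raddf_sum big_map big_enum /=.
by apply: eq_bigr => j _; rewrite -[contract h _]/(contractL h _) linearZ dual_linZ.
Qed.

(* For a comodule morphism iM : M -> C, acting by eps o iM recovers iM:
   (eps o iM).f (m) = f(iM(m)_(1) eps(iM(m)_(2))) = f(iM m) by counitality. *)
Lemma eps_comp_lin (M : comodule K) (iM : {linear M -> C}) a (x y : M) :
  (eps K (iM (a *: x + y)) : R^o) = a *: (eps K (iM x) : R^o) + (eps K (iM y) : R^o).
Proof. by rewrite linearP eps_add eps_scalel. Qed.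

Lemma dual_act_eps (M : comodule K) (iM : {linear M -> C})
    (f : {linear C -> R^o}) m :
  comod_hom_to_C iM -> dual_act (linear_of (eps_comp_lin iM)) f m = f (iM m).
Proof.
move=> iM_hom.
have bal : balanced (rC K) (fun c c' : C => f (rC K c (eps K c'))).
  split.
  - by move=> a a' b; rewrite rC_addl raddfD.
  - by move=> a b b'; rewrite eps_add rC_addr raddfD.
  - by move=> a r b; rewrite -rC_mul eps_scalel.
rewrite /dual_act; have := iM_hom m _ _ bal; rewrite big_map /= => <-.
by rewrite -raddf_sum Delta_counitr.
Qed.

(* If *M is rational, iM(m) has a finite expansion sum_i h_i(m) c_i: both
   sides agree under every functional, which separate the points of C. *)
Lemma rational_expansion (M : comodule K) (iM : {linear M -> C}) :
  locally_projective C -> comod_hom_to_C iM -> rational_dual M ->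
  exists s : seq ({linear M -> R^o} * C),
    forall m, iM m = \sum_(p <- s) (p.1 m : R) *: p.2.
Proof.
move=> C_lproj iM_hom M_rat.
have [s s_rat] := M_rat (linear_of (eps_comp_lin iM)).
have iM_rat (f : {linear C -> R^o}) m : f (iM m) = \sum_(p <- s) p.1 m * f p.2.
  by rewrite -s_rat dual_act_eps.
exists s => m; apply/eqP; rewrite -subr_eq0; apply/eqP.
apply: (locally_projective_separates C_lproj) => f.
rewrite raddfB; move: (iM_rat f m) => /= ->; rewrite raddf_sum /=.
by apply/eqP; rewrite subr_eq0; apply/eqP; apply: eq_bigr => p _; rewrite dual_linZ.
Qed.

End RationalDual.

Theorem lemma2p5 (R : pzRingType) (C : lmodType R) (K : coring C)
    (alpha : locally_projective C) :
  (forall M : comodule K,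
      finitely_generated M -> projective M -> rational_dual M) /\
  (forall (M N : comodule K) (iM : {linear M -> C}) (iN : {linear N -> C}),
      comod_hom_to_C iM -> comod_hom_to_C iN -> direct_sum_decomp iM iN ->
      (rational_dual M <-> finitely_generated M)).
Proof.
split=> [M M_fg M_proj | M N iM iN iM_hom _ [C_sum C_direct]].
  exact/dual_basis_rational/fg_projective_dual_basis.
split=> [M_rat | M_fg].
  have [s iM_exp] := rational_expansion alpha iM_hom M_rat.
  exact: summand_fg_of_expansion C_sum C_direct iM_exp.
exact/dual_basis_rational/(summand_dual_basis alpha C_sum C_direct).
Qed.
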